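(* Let $M/K$ be a finite Galois extension inside $\bar K$. Then $M/K$ is obtained by nontrivial strong cluster magnification from some subextension $L/K$ if and only if ${\rm Gal}(M/K)\cong A\times B$ for nontrivial groups $A$ and $B$ with $|A|>2$. If this happens, then $L/K$ is also Galois.
   Context: $K$ is a perfect field with a fixed algebraic closure $\bar K$; all extensions are finite and contained in $\bar K$. For a finite extension $L/K$, $\tilde L$ denotes its Galois closure in $\bar K$. Definition: $M/K$ is obtained by strong cluster magnification from a subextension $L/K$ (with $K\subseteq L\subseteq M$) if $[L:K]>2$, and there is a finite Galois extension $F/K$ with $\tilde L$ and $F$ linearly disjoint over $K$ and $LF=M$. The magnification is nontrivial if $F\neq K$. *)

From HB Require Import structures.
From mathcomp Require Import all_boot all_order all_algebra all_fingroup all_solvable all_field.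
Set Implicit Arguments. Unset Strict Implicit. Unset Printing Implicit Defensive.
Import GRing.Theory.
Local Open Scope ring_scope.

(* Setting: the base field K is the field [K : fieldType]; the finite Galois
   extension M/K is the ambient [M : splittingFieldType K] with [galois 1 {:M}].
   All subextensions of M/K are the subfields [{subfield M}]; the base field K
   corresponds to [1%AS].  Degrees over K are [\dim]. *)

Section Defs.
Variables (K : fieldType) (M : splittingFieldType K).

(* Galois closure of L over K inside M (M is normal over K, so this is the
   Galois closure in the algebraic closure): the compositum of all
   K-conjugates s(L), s in Gal(M/K). *)
Definition galois_closure (L : {subfield M}) : {subfield M} :=
  <<(\sum_(s in 'Gal({:M} / 1%AS)%g) (s @: L))%VS>>%AS.

Definition lin_disjoint (U V : {vspace M}) : Prop :=
  forall (s c : seq M),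
    all (fun x => x \in U) s -> free s ->
    size c = size s -> all (fun x => x \in V) c ->
    \sum_(i < size s) c`_i * s`_i = 0 -> all (fun x => x == 0) c.

Definition strong_cluster_magnification (L : {subfield M}) : Prop :=
  (2 < \dim L)%N /\
  exists F : {subfield M},
    galois 1%AS F /\ lin_disjoint (galois_closure L) F /\ (L * F)%AS = {:M}%AS.

Definition nontrivial_scm (L : {subfield M}) : Prop :=
  (2 < \dim L)%N /\
  exists F : {subfield M},
    galois 1%AS F /\ lin_disjoint (galois_closure L) F /\ (L * F)%AS = {:M}%AS
    /\ F != 1%AS.

End Defs.

From HB Require Import structures.
From mathcomp Require Import all_boot all_order all_algebra all_fingroup all_solvable all_field.
Set Implicit Arguments. Unset Strict Implicit. Unset Printing Implicit Defensive.
Import GRing.Theory.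
Local Open Scope ring_scope.

(* If M = LF with F/K Galois and F linearly disjoint from the Galois closure L'
   of L, then L' meets F in K, so [L'F : K] = [L' : K][F : K]; as also
   [LF : K] = [L : K][F : K] and L'F = LF = M, we get L = L', i.e. L/K is
   Galois.
   Then Gal(M/L) and Gal(M/F) are normal, meet trivially (LF = M) and generate
   Gal(M/K) (L and F meet in K), so Gal(M/K) = Gal(M/F) x Gal(M/L), of orders
   [L : K] > 2 and [F : K] > 1.  Conversely, Gal(M/K) = H1 x H2 gives Galois
   fixed fields L = M^H2 and F = M^H1 with LF = M and [M : K] = [L : K][F : K],
   and a compositum whose degree is the product of the degrees is linearly
   disjoint. *)

Section LinearDisjointness.
Variables (K : fieldType) (M : splittingFieldType K).
Implicit Types (E F U V : {subfield M}) (s c : seq M).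

Lemma dim_subfield_gt1 F : (1 < \dim F)%N = (F != 1%AS).
Proof.
rewrite ltn_neqAle adim_gt0 andbT eq_sym; congr negb; apply/eqP/eqP => [dF1|->].
  by apply/val_inj/eqP; rewrite /= eq_sym eqEdim sub1v dimv1 dF1.
exact: dimv1.
Qed.

Lemma lin_disjoint_capv1 U V : lin_disjoint U V -> (U :&: V)%VS = 1%VS.
Proof.
move=> UV; apply/eqP; rewrite eqEsubv subv_cap !sub1v !andbT.
apply/subvP=> x /memv_capP[Ux Vx]; apply/negPn/negP=> xNK.
(* [x; 1] is free over K, yet [-1; x] is a nonzero relation over V. *)
have := UV [:: x; 1] [:: -1; x].
rewrite /= Ux mem1v Vx rpredN mem1v free_cons span_seq1 seq1_free oner_neq0 xNK.
rewrite big_ord_recr big_ord_recr big_ord0 /= add0r mulN1r mulr1 addNr.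
by rewrite eqr_oppLR oppr0 oner_eq0 => /(_ isT isT erefl isT erefl).
Qed.

Lemma dim_prodv_subv (S E F : {vspace M}) : (S <= E)%VS ->
  (\dim (E * F) + \dim S * \dim F <= \dim E * \dim F + \dim (S * F))%N.
Proof.
move=> sSE; have EF : (E * F <= (E :\: S) * F + S * F)%VS.
  by rewrite -prodvDl addv_diff (addv_idPl sSE).
have dE : (\dim (E :\: S) + \dim S = \dim E)%N.
  by rewrite -(dimv_cap_compl E S) (capv_idPr sSE) addnC.
have := leq_trans (dimvS EF) (dimv_add_leqif _ _).1.
rewrite -dE mulnDl addnAC leq_add2r => /leq_trans-> //.
by rewrite leq_add2r dim_prodv.
Qed.

Lemma dim_prodv_span_lt s c F (k : 'I_(size s)) :
    all (fun x => x \in F) c -> \sum_(i < size s) c`_i * s`_i = 0 ->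
    c`_k != 0 ->
  (\dim (<<s>> * F) < size s * \dim F)%N.
Proof.
move=> cF rel nz_ck.
have {}cF i : c`_i \in F.
  have [/(all_nthP 0 cF)//|/(nth_default 0)->] := ltnP i (size c).
  exact: rpred0.
pose T := (\sum_(i < size s | i != k) <[s`_i]>)%VS.
have skT : s`_k \in (T * F)%VS.
  have ck_sk : c`_k * s`_k = - \sum_(i < size s | i != k) c`_i * s`_i.
    by apply/eqP; move: rel; rewrite (bigD1 k) //= => /eqP; rewrite addr_eq0.
  have -> : s`_k = \sum_(i < size s | i != k) s`_i * - (c`_i / c`_k).
    apply: (mulfI nz_ck); rewrite ck_sk mulr_sumr -sumrN; apply: eq_bigr => i _.
    by rewrite mulrCA mulrN mulrCA divff // mulr1 mulrN mulrC.
  apply: rpred_sum => i ik; apply: memv_mul; last by rewrite rpredN rpred_div.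
  exact: (subvP (sumv_sup i ik (subvv _))) _ (memv_line _).
have sF : (<<s>> * F <= T * F)%VS.
  rewrite span_def (big_nth 0) big_mkord (bigD1 k) //= prodvDl.
  rewrite subv_add subvv andbT.
  apply: subv_trans (prodvSl F (_ : <[s`_k]> <= T * F)%VS) _.
    by rewrite -memvE.
  by rewrite -prodvA prodv_id.
have dT : (\dim T < size s)%N.
  apply: leq_ltn_trans (dimv_leq_sum _ _ _) _.
  have n_eq : (\sum_(i < size s) 1 = size s)%N by rewrite sum1_card card_ord.
  rewrite -[X in (_ < X)%N]n_eq [X in (_ < X)%N](bigD1 k) //= add1n ltnS.
  by apply: leq_sum => i _; rewrite dim_vline leq_b1.
apply: leq_ltn_trans (dimvS sF) (leq_ltn_trans (dim_prodv T F) _).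
by rewrite ltn_pmul2r ?adim_gt0.
Qed.

Lemma lin_disjoint_of_dim_prodv E F :
  \dim (E * F) = (\dim E * \dim F)%N -> lin_disjoint E F.
Proof.
move=> dEF s c sE free_s szc cF rel; apply/(all_nthP 0) => k ltk /=.
rewrite szc in ltk; apply/negPn/negP => nz_ck.
have sSE : (<<s>> <= E)%VS by apply/span_subvP => x /(allP sE).
have := dim_prodv_subv F sSE; rewrite dEF leq_add2l (eqP free_s) => le_sF.
have := dim_prodv_span_lt (k := Ordinal ltk) cF rel nz_ck.
by rewrite ltnNge le_sF.
Qed.

End LinearDisjointness.

Local Open Scope group_scope.

Lemma normal_TI_dprod (gT : finGroupType) (G H1 H2 : {group gT}) :
  H1 <| G -> H2 <| G -> H1 :&: H2 = 1 -> H1 * H2 = G -> H1 \x H2 = G.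
Proof.
move=> nH1G nH2G tiH12 <-; rewrite dprodE //.
apply/commG1P/trivgP; rewrite -tiH12 setIC commg_subI // subsetI subxx /=.
  exact: subset_trans (normal_sub nH2G) (normal_norm nH1G).
exact: subset_trans (normal_sub nH1G) (normal_norm nH2G).
Qed.

Lemma isog_setX_dprod (gT aT bT : finGroupType)
    (G : {group gT}) (A : {group aT}) (B : {group bT}) :
  G \isog setX A B ->
  exists H1 H2 : {group gT}, [/\ H1 \x H2 = G, #|H1| = #|A| & #|H2| = #|B|].
Proof.
case/isog_symr/isogP => f injf imf.
have sA : setX A 1 \subset setX A B by rewrite setXS ?sub1G.
have sB : setX 1 B \subset setX A B by rewrite setXS ?sub1G.
exists (f @* setX A 1)%G, (f @* setX 1 B)%G; split.
- by rewrite /= -imf; apply: injm_dprod => //; apply: setX_dprod.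
- by rewrite card_injm // cardsX cards1 muln1.
by rewrite card_injm // cardsX cards1 mul1n.
Qed.

Local Close Scope group_scope.

Section GaloisCorrespondence.
Variables (K : fieldType) (M : splittingFieldType K).
Implicit Types (E F L : {subfield M}).

Lemma gal_prodv E F :
  ('Gal({:M} / (E * F)%AS) = 'Gal({:M} / E) :&: 'Gal({:M} / F))%g.
Proof.
apply/eqP; rewrite eqEsubset subsetI !galS ?field_subvMr ?field_subvMl //=.
pose H := setI_group 'Gal({:M} / E)%G 'Gal({:M} / F)%G.
have -> : ('Gal({:M} / E) :&: 'Gal({:M} / F))%g = 'Gal({:M} / fixedField H)%g.
  by rewrite gal_fixedField.
by rewrite galS // prodv_sub //= -galois_connection ?subvf ?subsetIl ?subsetIr.
Qed.

Hypothesis galM : galois 1 {:M}.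

Lemma card_gal_mul_dim E : (#|'Gal({:M} / E)%g| * \dim E)%N = \dim {:M}.
Proof.
rewrite -galois_dim; first exact/esym/dim_sup_field/subvf.
by apply: galoisS galM; rewrite sub1v subvf.
Qed.

Lemma card_gal_dim : #|'Gal({:M} / 1%AS)%g| = \dim {:M}.
Proof. by rewrite -(card_gal_mul_dim 1%AS) dimv1 muln1. Qed.

Lemma gal_eq1 E : ('Gal({:M} / E) == 1)%g = (E == {:M}%AS).
Proof.
apply/eqP/eqP => [G1 | ->].
  apply/val_inj/eqP; rewrite /= eqEdim subvf.
  by rewrite -(card_gal_mul_dim E) G1 cards1 mul1n leqnn.
apply/eqP; rewrite trivg_card1 -(eqn_pmul2r (adim_gt0 {:M})) mul1n.
exact/eqP/card_gal_mul_dim.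
Qed.

Lemma fixedField_gal E : fixedField 'Gal({:M} / E)%g = E.
Proof. by apply/galois_fixedField/(galoisS _ galM); rewrite sub1v subvf. Qed.

Lemma galois1_normal L : galois 1 L -> ('Gal({:M} / L) <| 'Gal({:M} / 1%AS))%g.
Proof.
by case/and3P=> _ _ nL; apply: normalField_normal nL; rewrite ?sub1v ?subvf.
Qed.

Lemma galois1P L :
  galois 1 L <->
  {in 'Gal({:M} / 1%AS)%g, forall s : gal_of {:M}, (s @: L <= L)%VS}.
Proof.
split=> [galL s Gs | stabL].
  have [_ _ nL] := and3P galL.
  have /(normalField_kAut _ nL) : kAut 1 {:M} s by rewrite -gal_kAut ?subvf.
  by rewrite sub1v subvf kAutE => /(_ isT)/andP[].
apply: (normalField_galois galM); first by rewrite sub1v subvf.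
apply/forall_inP => f; rewrite inE => /kAut_to_gal[s Gs fs].
rewrite (@eq_in_limg _ _ _ L f s); last by move=> a _; apply: fs (memvf a).
by rewrite eqEdim stabL //= limg_dim_eq ?(eqP (AEnd_lker0 _)) ?capv0.
Qed.

Lemma gal_capv E F : galois 1 F ->
  ('Gal({:M} / (E :&: F)%AS) = 'Gal({:M} / E) * 'Gal({:M} / F))%g.
Proof.
move=> galF; have nF := galois1_normal galF.
rewrite -norm_joinEl; last first.
  exact: subset_trans (galS _ (sub1v E)) (normal_norm nF).
rewrite /joing -gal_generated; congr 'Gal(_ / _)%g; apply/eqP.
rewrite eqEsubv -galois_connection ?subvf // subUset !galS ?capvSl ?capvSr //=.
rewrite subv_cap -{2}(fixedField_gal E) -{3}(fixedField_gal F).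
by rewrite !fixedFieldS ?subsetUl ?subsetUr.
Qed.

Lemma dim_prodv_galois E F : galois 1 F -> (E :&: F)%VS = 1%VS ->
  \dim (E * F) = (\dim E * \dim F)%N.
Proof.
move=> galF EF1.
have := mul_cardG 'Gal({:M} / E)%G 'Gal({:M} / F)%G.
rewrite -gal_capv //= EF1 -gal_prodv card_gal_dim => cardEF.
apply/eqP; rewrite -(@eqn_pmul2l (\dim {:M} * #|'Gal({:M} / (E * F)%AS)%g|)).
  by rewrite -mulnA card_gal_mul_dim -cardEF mulnACA !card_gal_mul_dim.
by rewrite muln_gt0 adim_gt0 cardG_gt0.
Qed.

Lemma limg_sub_galois_closure L s : s \in 'Gal({:M} / 1%AS)%g ->
  (s @: L <= galois_closure L)%VS.
Proof. by move=> Gs; apply: subv_trans (sub_agenv _); apply: (sumv_sup s). Qed.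

Lemma sub_galois_closure L : (L <= galois_closure L)%VS.
Proof.
apply/subvP => a La; rewrite -(gal_id {:M}%AS a).
exact/(subvP (limg_sub_galois_closure L (group1 _)))/memv_img.
Qed.

Lemma galois_closure_id L : galois 1 L -> galois_closure L = L :> {vspace M}.
Proof.
move=> /galois1P stabL; apply/eqP; rewrite eqEsubv sub_galois_closure andbT.
rewrite -[X in (_ <= X)%VS](subfield_closed L) agenvS //.
by apply/subv_sumP => s /stabL.
Qed.

Lemma scm_galois_closure_id L F : galois 1 F ->
    lin_disjoint (galois_closure L) F -> (L * F)%AS = {:M}%AS ->
  galois_closure L = L :> {vspace M}.
Proof.
move=> galF LD LF; have cap1 := lin_disjoint_capv1 LD.
have LF1 : (L :&: F)%VS = 1%VS.
  apply/eqP; rewrite eqEsubv subv_cap !sub1v !andbT -cap1.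
  by rewrite capvS ?sub_galois_closure.
apply/eqP; rewrite eq_sym eqEdim sub_galois_closure /=.
rewrite -(leq_pmul2r (adim_gt0 F)) -!dim_prodv_galois //.
have LFv : (L * F)%VS = fullv := congr1 val LF.
by rewrite LFv dimvS ?subvf.
Qed.

Lemma scm_galois L F : galois 1 F ->
  lin_disjoint (galois_closure L) F -> (L * F)%AS = {:M}%AS -> galois 1 L.
Proof.
move=> galF LD LF; apply/galois1P => s Gs.
by rewrite -{2}(scm_galois_closure_id galF LD LF) limg_sub_galois_closure.
Qed.

Lemma gal_dprod L F : galois 1 L -> galois 1 F ->
    (L :&: F)%VS = 1%VS -> (L * F)%AS = {:M}%AS ->
  ('Gal({:M} / L) \x 'Gal({:M} / F))%g = 'Gal({:M} / 1%AS)%g.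
Proof.
move=> galL galF LF1 LF; apply: normal_TI_dprod; rewrite ?galois1_normal //.
  by apply/eqP; rewrite -gal_prodv gal_eq1 LF.
by rewrite -gal_capv //= LF1.
Qed.

Lemma scm_gal_dprod L F : galois 1 F ->
    lin_disjoint (galois_closure L) F -> (L * F)%AS = {:M}%AS ->
  [/\ ('Gal({:M} / F) \x 'Gal({:M} / L))%g = 'Gal({:M} / 1%AS)%g,
      #|'Gal({:M} / F)%g| = \dim L & #|'Gal({:M} / L)%g| = \dim F].
Proof.
move=> galF LD LF; have galL := scm_galois galF LD LF.
have LF1 : (L :&: F)%VS = 1%VS.
  by rewrite -(scm_galois_closure_id galF LD LF); apply: lin_disjoint_capv1.
have LFv : (L * F)%VS = fullv := congr1 val LF.
have dimM : \dim {:M} = (\dim L * \dim F)%N by rewrite -dim_prodv_galois // LFv.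
split; first by rewrite dprodC gal_dprod.
  by apply/eqP; rewrite -(eqn_pmul2r (adim_gt0 F)) card_gal_mul_dim dimM.
by apply/eqP; rewrite -(eqn_pmul2r (adim_gt0 L)) card_gal_mul_dim dimM mulnC.
Qed.

Lemma scm_of_gal_dprod (H1 H2 : {group gal_of {:M}}) :
    (H1 \x H2)%g = 'Gal({:M} / 1%AS)%g -> (2 < #|H1|)%N -> (1 < #|H2|)%N ->
  nontrivial_scm (fixedField_aspace H2).
Proof.
move=> dp H1_gt2 H2_gt1; have [nH1 nH2] := dprod_normal2 dp.
set L := fixedField_aspace H2; set F := fixedField_aspace H1.
have galL : galois 1 L := normal_fixedField_galois galM nH2.
have galF : galois 1 F := normal_fixedField_galois galM nH1.
have card_fix (H : {group gal_of {:M}}) :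
    (#|H| * \dim (fixedField H))%N = \dim {:M}.
  by have := card_gal_mul_dim (fixedField_aspace H); rewrite gal_fixedField.
have cardG : (#|H1| * #|H2|)%N = \dim {:M}.
  by rewrite (dprod_card dp) card_gal_dim.
have dimL : \dim L = #|H1|.
  by apply/eqP; rewrite -(eqn_pmul2l (cardG_gt0 H2)) card_fix mulnC cardG.
have dimF : \dim F = #|H2|.
  by apply/eqP; rewrite -(eqn_pmul2l (cardG_gt0 H1)) card_fix cardG.
have LF : (L * F)%AS = {:M}%AS.
  apply/eqP; rewrite -gal_eq1 gal_prodv !gal_fixedField setIC.
  by case/dprodP: dp => _ _ _ ->.
split; first by rewrite dimL.
exists F; split=> //; split; last by split=> //; rewrite -dim_subfield_gt1 dimF.
rewrite galois_closure_id //; apply: lin_disjoint_of_dim_prodv.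
have LFv : (L * F)%VS = fullv := congr1 val LF.
by rewrite LFv dimL dimF cardG.
Qed.

End GaloisCorrespondence.

Theorem corollary4p8 (K : fieldType) (M : splittingFieldType K)
    (HM : galois 1%AS {:M}%AS) :
  ((exists L : {subfield M}, nontrivial_scm L) <->
   (exists (aT bT : finGroupType) (A : {group aT}) (B : {group bT}),
      (2 < #|A|)%N /\ (1 < #|B|)%N /\ ('Gal({:M}%AS / 1%AS) \isog setX A B)%g))
  /\ (forall L : {subfield M}, nontrivial_scm L -> galois 1%AS L).
Proof.
split; last first.
  move=> L [_ [F [galF [LD [LF _]]]]]; exact: (scm_galois HM galF LD LF).
split=> [[L [dimL [F [galF [LD [LF nF1]]]]]] |
         [aT [bT [A [B [A_gt2 [B_gt1 isoG]]]]]]].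
  have [dp cardF cardL] := scm_gal_dprod HM galF LD LF.
  exists (gal_of {:M}), (gal_of {:M}), 'Gal({:M} / F)%G, 'Gal({:M} / L)%G.
  split; first by rewrite cardF.
  split; first by rewrite cardL dim_subfield_gt1.
  by rewrite isog_sym; apply: misom_isog; apply/mulgmP.
have [H1 [H2 [dp cardH1 cardH2]]] := isog_setX_dprod isoG.
exists (fixedField_aspace H2).
by apply: (scm_of_gal_dprod HM dp); rewrite ?cardH1 ?cardH2.
Qed.
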